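(* Let $R$ be a binary relation on a set $A$ satisfying $\mathbf{WFminDNE}\lnot\lnot$. If either $R$ is finitely branching (for every $x$ there is a finite list containing every $y$ with $R\,y\,x$) or accessibility is $\lnot\lnot$-closed ($\mathbf{accDNE}$), then $R$ satisfies $\mathbf{WFacc}\lnot\lnot$.
   Context: Work in constructive (intuitionistic) logic / Martin-Löf type theory without excluded middle or other axioms. Let $R$ be a binary relation on $A$ (think of $R\,y\,x$ as a reduction step from $x$ to $y$). Accessibility is defined inductively: $x$ is accessible if every $y$ with $R\,y\,x$ is accessible. For $P\subseteq A$: $x$ is $P$-minimal if $x\in P$ and for all $y$, $R\,y\,x$ implies $y\notin P$; $P$ is $\lnot\lnot$-closed if $\lnot\lnot(x\in P)$ implies $x\in P$; $P$ is nonempty if some $x\in P$. $\mathbf{WFminDNE}\lnot\lnot$: for every nonempty $\lnot\lnot$-closed $P$, $\lnot\lnot(\exists x.\ x$ is $P$-minimal$)$. $\mathbf{WFacc}\lnot\lnot$: for every $x$, $\lnot\lnot(x$ accessible$)$. $\mathbf{accDNE}$: for all $x$, $\lnot\lnot(x$ accessible$)$ implies $x$ accessible. *)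

From Stdlib Require Import List.

Section Defs.
Context {A : Type} (R : A -> A -> Prop).

Definition minimal (P : A -> Prop) (x : A) : Prop :=
  P x /\ forall y, R y x -> ~ P y.

Definition dnclosed (P : A -> Prop) : Prop :=
  forall x, ~ ~ P x -> P x.

Definition nonempty (P : A -> Prop) : Prop := exists x, P x.

Definition WFminDNE_nn : Prop :=
  forall P : A -> Prop, nonempty P -> dnclosed P ->
    ~ ~ (exists x, minimal P x).

Definition WFacc_nn : Prop := forall x, ~ ~ Acc R x.

Definition accDNE : Prop := forall x, ~ ~ Acc R x -> Acc R x.

Definition finitely_branching : Prop :=
  forall x, exists l : list A, forall y, R y x -> In y l.
End Defs.

(* Suppose some [x0] were not accessible. The predicate [~ Acc R] is then
   nonempty and ¬¬-closed, so WFminDNE¬¬ yields (¬¬) a minimal inaccessible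
   [m]: every predecessor of [m] is ¬¬-accessible. Either hypothesis turns this
   into ¬¬(Acc R m): with finite branching, double negation commutes with the
   finitely many predecessors; with accDNE, each predecessor is accessible
   outright. This contradicts [~ Acc R m]. *)

From Stdlib Require Import List.

Lemma nn_impl (P Q : Prop) : (P -> ~ ~ Q) -> ~ ~ (P -> Q).
Proof.
  intros HPQ nPQ. apply nPQ. intros p. exfalso.
  apply (HPQ p). intros q. apply nPQ. intros _. exact q.
Qed.

Lemma nn_forall_In {A : Type} (Q : A -> Prop) (l : list A) :
  (forall y, ~ ~ Q y) -> ~ ~ (forall y, In y l -> Q y).
Proof.
  intros HQ. induction l as [|a l IH]; intros nall.
  - apply nall. intros y [].
  - apply IH. intros Hl. apply (HQ a). intros Qa. apply nall.
    intros y [<- | Hy]; auto.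
Qed.

Section NotAcc.
Context {A : Type} (R : A -> A -> Prop).

Lemma dnclosed_not_Acc : dnclosed (fun x => ~ Acc R x).
Proof. intros x nnnacc acc. apply nnnacc. intros nacc. exact (nacc acc). Qed.

Lemma nn_Acc_intro_fb :
  finitely_branching R ->
  forall x, (forall y, R y x -> ~ ~ Acc R y) -> ~ ~ Acc R x.
Proof.
  intros Hfb x Hpred nacc. destruct (Hfb x) as [l Hl].
  apply (nn_forall_In (fun y => R y x -> Acc R y) l).
  - intros y. apply nn_impl, Hpred.
  - intros Hall. apply nacc. constructor. intros y r. exact (Hall y (Hl y r) r).
Qed.

Lemma nn_Acc_intro_dne :
  accDNE R ->
  forall x, (forall y, R y x -> ~ ~ Acc R y) -> Acc R x.
Proof. intros Hdne x Hpred. constructor. intros y r. exact (Hdne y (Hpred y r)). Qed.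

Lemma not_minimal_not_Acc :
  (finitely_branching R \/ accDNE R) ->
  forall m, ~ minimal R (fun x => ~ Acc R x) m.
Proof.
  intros Hor m [nacc Hpred].
  destruct Hor as [Hfb | Hdne].
  - exact (nn_Acc_intro_fb Hfb m Hpred nacc).
  - exact (nacc (nn_Acc_intro_dne Hdne m Hpred)).
Qed.

End NotAcc.

Theorem mainTheorem18 (A : Type) (R : A -> A -> Prop) :
  WFminDNE_nn R ->
  (finitely_branching R \/ accDNE R) ->
  WFacc_nn R.
Proof.
  intros Hmin Hor x0 nacc0.
  apply (Hmin (fun x => ~ Acc R x)).
  - exists x0. exact nacc0.
  - apply dnclosed_not_Acc.
  - intros [m Hm]. exact (not_minimal_not_Acc R Hor m Hm).
Qed.
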